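(* Let $G_m$ be a parametric regulatory network and $\pi$ a finite sequence of transitions in $\Delta(G_m)$, with $\tilde\pi$ the set of its transitions. Then $p^\#(\tilde\pi)\neq\varnothing$ if and only if $p(\tilde\pi)\neq\emptyset$.
   Context: An influence graph is $G=(V,I)$ with $V=\{1,\dots,n\}$, $I\subseteq V\times V$; regulators $n^-(v)=\{u\mid(u,v)\in I\}$. $m\in\mathbb N^n$, $D_v=\{0,\dots,m_v\}$, $G_m=(G,m)$. Regulator states $\Omega_v=\prod_{u\in n^-(v)}D_u$. Parametrisations: $P\in\mathbb P(G_m)=\prod_{\langle v,\omega\rangle,\ \omega\in\Omega_v}D_v$ with coordinates $P_{v,\omega}$, ordered componentwise; $\bot$ is the zero vector, $\top_{v,\omega}=m_v$. A pair $(L,U)$ denotes $\{P\mid L\le P\le U\}$, the empty lattice $\varnothing$ when $L\not\le U$. States $S(G_m)=\prod_vD_v$; $\omega_v(x)$ projects $x$ onto the regulators of $v$. Transitions: $x\xrightarrow{v,+}y$ ($y$ equals $x$ except $y_v=x_v+1\le m_v$), $x\xrightarrow{v,-}y$ ($y_v=x_v-1\ge0$). $\mathcal P_{x\xrightarrow{v,+}y}=\{P\mid P_{v,\omega_v(x)}\ge x_v+1\}$, $\mathcal P_{x\xrightarrow{v,-}y}=\{P\mid P_{v,\omega_v(x)}\le x_v-1\}$; $p(\emptyset)=\mathbb P(G_m)$, $p(T)=\bigcap_{t\in T}\mathcal P_t$. $\nabla_{x\xrightarrow{v,+}y}(L,U)=(\max(L,\bot[(v,\omega_v(x))\leftarrow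 x_v+1]),U)$, $\nabla_{x\xrightarrow{v,-}y}(L,U)=(L,\min(U,\top[(v,\omega_v(x))\leftarrow x_v-1]))$; $p^\#(\emptyset)=(\bot,\top)$, $p^\#(T\cup\{t\})=\nabla_t(p^\#(T))$. *)

From mathcomp Require Import all_boot.
Set Implicit Arguments. Unset Strict Implicit. Unset Printing Implicit Defensive.

(* A parametric regulatory network G_m is given by
   n : nat            (V = 'I_n, i.e. {1..n} shifted to {0..n-1}),
   I : rel 'I_n       (I u v  <=>  (u,v) is an edge, i.e. u is a regulator of v),
   m : 'I_n -> nat    (D_v = {0..m v}). *)

Definition state (n : nat) := {ffun 'I_n -> nat}.
Definition is_state n (m : 'I_n -> nat) (x : state n) : Prop :=
  forall v, x v <= m v.

(* Regulator states Omega_v = prod_{u in n^-(v)} D_u, encoded as functions on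
   'I_n that are 0 outside the regulators n^-(v). *)
Definition is_regstate n (I : rel 'I_n) (m : 'I_n -> nat) (v : 'I_n)
  (w : {ffun 'I_n -> nat}) : Prop :=
  forall u, (I u v -> w u <= m u) /\ (~~ I u v -> w u = 0).

Definition omega n (I : rel 'I_n) (v : 'I_n) (x : state n) : {ffun 'I_n -> nat} :=
  [ffun u => if I u v then x u else 0].

(* Parametrisations: P v w is the coordinate P_{v,w}; only the coordinates with
   w a regulator state of v are meaningful. *)
Definition param (n : nat) := 'I_n -> {ffun 'I_n -> nat} -> nat.

Definition is_param n (I : rel 'I_n) (m : 'I_n -> nat) (P : param n) : Prop :=
  forall v w, is_regstate I m v w -> P v w <= m v.

Definition param_le n (I : rel 'I_n) (m : 'I_n -> nat) (P Q : param n) : Prop :=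
  forall v w, is_regstate I m v w -> P v w <= Q v w.

Definition pbot n : param n := fun _ _ => 0.
Definition ptop n (m : 'I_n -> nat) : param n := fun v _ => m v.

Definition pupd n (B : param n) (v : 'I_n) (w : {ffun 'I_n -> nat}) (k : nat)
  : param n :=
  fun v' w' => if (v' == v) && (w' == w) then k else B v' w'.

Definition pmax n (P Q : param n) : param n := fun v w => maxn (P v w) (Q v w).
Definition pmin n (P Q : param n) : param n := fun v w => minn (P v w) (Q v w).

(* A transition x --(v,s)--> y, with s = true for '+' and s = false for '-'. *)
Definition trans (n : nat) := (state n * 'I_n * bool * state n)%type.
Definition tsrc n (t : trans n) : state n := t.1.1.1.
Definition tvar n (t : trans n) : 'I_n := t.1.1.2.
Definition tsign n (t : trans n) : bool := t.1.2.
Definition ttgt n (t : trans n) : state n := t.2.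

Definition is_transition n (m : 'I_n -> nat) (t : trans n) : Prop :=
  let x := tsrc t in let v := tvar t in let y := ttgt t in
  is_state m x /\ is_state m y /\ (forall u, u != v -> y u = x u) /\
  (if tsign t then y v = (x v).+1 else x v = (y v).+1).

Definition param_in_trans n (I : rel 'I_n) (t : trans n) (P : param n) : Prop :=
  let x := tsrc t in let v := tvar t in
  if tsign t then (x v).+1 <= P v (omega I v x)
  else P v (omega I v x) <= (x v).-1.

Definition p_set n (I : rel 'I_n) (m : 'I_n -> nat) (T : seq (trans n))
  (P : param n) : Prop :=
  is_param I m P /\ forall t, t \in T -> param_in_trans I t P.

Definition nabla n (I : rel 'I_n) (m : 'I_n -> nat) (t : trans n)
  (LU : param n * param n) : param n * param n :=
  let x := tsrc t in let v := tvar t in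
  if tsign t then
    (pmax LU.1 (pupd (@pbot n) v (omega I v x) (x v).+1), LU.2)
  else
    (LU.1, pmin LU.2 (pupd (ptop m) v (omega I v x) (x v).-1)).

Definition psharp n (I : rel 'I_n) (m : 'I_n -> nat) (T : seq (trans n))
  : param n * param n :=
  foldl (fun LU t => nabla I m t LU) (@pbot n, ptop m) T.

Definition lattice_nonempty n (I : rel 'I_n) (m : 'I_n -> nat)
  (LU : param n * param n) : Prop := param_le I m LU.1 LU.2.

From mathcomp Require Import all_boot.
Set Implicit Arguments. Unset Strict Implicit. Unset Printing Implicit Defensive.

(* Each operator [nabla t] is exact: a parametrisation of P(G_m) lies in the
   lattice [nabla t (L, U)] iff it lies in [(L, U)] and in P_t.  Hence the
   lattice p#(T) cuts out exactly p(T) inside P(G_m), so p#(T) empty forces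
   p(T) empty.  Conversely, when p#(T) = (L, U) is nonempty, L itself is in
   p(T): it is a parametrisation because a transition x --(v,+)--> y only
   raises the bound at (v, omega_v(x)) to x_v + 1 = y_v <= m_v. *)

Section ExactAbstraction.
Variables (n : nat) (I : rel 'I_n) (m : 'I_n -> nat).

Definition param_between (LU : param n * param n) (P : param n) : Prop :=
  forall v w, is_regstate I m v w -> LU.1 v w <= P v w <= LU.2 v w.

Definition psharp_from (LU : param n * param n) (s : seq (trans n)) :=
  foldl (fun LU t => nabla I m t LU) LU s.

Lemma omega_regstate (v : 'I_n) (x : state n) :
  is_state m x -> is_regstate I m v (omega I v x).
Proof. by move=> Hx u; rewrite ffunE; split=> [->|/negbTE ->]. Qed.

Lemma param_between_init (P : param n) :
  param_between (@pbot n, ptop m) P <-> is_param I m P.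
Proof. by split=> HP v w /HP. Qed.

Lemma param_between_nabla (t : trans n) LU (P : param n) :
  is_state m (tsrc t) -> is_param I m P ->
  param_between (nabla I m t LU) P <-> param_between LU P /\ param_in_trans I t P.
Proof.
move=> /(omega_regstate (tvar t)) Hw HP.
rewrite /param_between /nabla /param_in_trans /pmax /pmin /pupd.
case: (tsign t) => /=; split.
- move=> H; split=> [v w /H|]; first by rewrite geq_max -andbA => /and3P[-> _ ->].
  by have := H _ _ Hw; rewrite !eqxx geq_max => /andP[/andP[]].
- move=> [H Ht] v w /H /andP[HL HU]; rewrite geq_max HL HU andbT.
  by case: ifP => // /andP[/eqP -> /eqP ->].
- move=> H; split=> [v w /H|]; first by rewrite leq_min => /and3P[-> ->].
  by have := H _ _ Hw; rewrite !eqxx leq_min => /and3P[].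
- move=> [H Ht] v w Hr; have /andP[HL HU] := H v w Hr.
  rewrite leq_min HL HU /=.
  by case: ifP => [/andP[/eqP -> /eqP ->] // | _]; apply: HP.
Qed.

Lemma param_between_psharp_from (s : seq (trans n)) LU (P : param n) :
  (forall t, t \in s -> is_state m (tsrc t)) -> is_param I m P ->
  param_between (psharp_from LU s) P <->
  param_between LU P /\ (forall t, t \in s -> param_in_trans I t P).
Proof.
move=> + HP; elim: s LU => [|t s IH] LU Hs; first by split=> // [[]].
have Hs' t' : t' \in s -> is_state m (tsrc t').
  by move=> Ht'; apply: Hs; rewrite inE Ht' orbT.
have Ht := Hs t (mem_head t s).
split.
- move=> /(IH _ Hs') [/(param_between_nabla LU Ht HP) [HLU HtP] HsP].
  by split=> // t'; rewrite inE => /orP[/eqP -> | /HsP].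
- move=> [HLU HtsP]; apply/(IH _ Hs'); split.
  + by apply/(param_between_nabla LU Ht HP); split=> //; apply: HtsP; rewrite mem_head.
  + by move=> t' Ht'; apply: HtsP; rewrite inE Ht' orbT.
Qed.

Lemma param_between_psharp (s : seq (trans n)) (P : param n) :
  (forall t, t \in s -> is_state m (tsrc t)) -> is_param I m P ->
  param_between (psharp I m s) P <-> (forall t, t \in s -> param_in_trans I t P).
Proof.
move=> Hs HP; have Hsharp := param_between_psharp_from (@pbot n, ptop m) Hs HP.
split=> [/Hsharp [] // | Hts]; apply/Hsharp.
by split=> //; apply/param_between_init.
Qed.

Lemma nabla_lower_param (t : trans n) LU :
  is_transition m t -> is_param I m LU.1 -> is_param I m (nabla I m t LU).1.
Proof.
case=> _ [Hy [_]]; rewrite /nabla /pmax /pupd.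
case: (tsign t) => //= Hv HL v w Hr.
rewrite geq_max HL //=; case: ifP => // /andP[/eqP -> _].
by rewrite -Hv.
Qed.

Lemma psharp_from_lower_param (s : seq (trans n)) LU :
  (forall t, t \in s -> is_transition m t) ->
  is_param I m LU.1 -> is_param I m (psharp_from LU s).1.
Proof.
elim: s LU => [|t s IH] LU //= Hs HL; apply: IH.
- by move=> t' Ht'; apply: Hs; rewrite inE Ht' orbT.
- by apply: nabla_lower_param => //; apply: Hs; rewrite mem_head.
Qed.

End ExactAbstraction.

Theorem corollary1 (n : nat) (I : rel 'I_n) (m : 'I_n -> nat)
  (pi : seq (trans n)) :
  (forall t, t \in pi -> is_transition m t) ->
  (lattice_nonempty I m (psharp I m pi) <-> exists P : param n, p_set I m pi P).
Proof.
move=> Hpi; have Hsrc t : t \in pi -> is_state m (tsrc t) by case/Hpi.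
split=> [Hne | [P [HP HPpi]] v w Hr].
- set L := (psharp I m pi).1.
  have HL : is_param I m L by apply: psharp_from_lower_param.
  have HLbetween : param_between I m (psharp I m pi) L.
    by move=> v w Hr; rewrite leqnn; apply: Hne.
  by exists L; split; last exact/(param_between_psharp Hsrc HL).
- have /(param_between_psharp Hsrc HP) HPbetween := HPpi.
  by case/andP: (HPbetween v w Hr); apply: leq_trans.
Qed.
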